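(* Let $2<\gamma<3$ and let $k=k(n)$ satisfy $k=o(n)$. Then, as $n\to\infty$, \[h_n-\sum_{i=k}^{n-1}\left(\frac{i/n}{1-i/n}-\log\left(1+\frac{i/n}{1-i/n}\right)\right)\left(\frac ni\right)^{\gamma}\cdot\frac1n=\sum_{i=1}^{\infty}\left(\frac1i-\frac{i}{(i+1)(i+2-\gamma)}\right)+o(1),\] where $h_n=\sum_{j=1}^n 1/j$. *)

From Stdlib Require Import Reals.
From Coquelicot Require Import Coquelicot.
Open Scope R_scope.

Definition harmonic (n : nat) : R := sum_n_m (fun j => / INR j) 1 n.

Definition phi (x : R) : R := x / (1 - x) - ln (1 + x / (1 - x)).

Definition tail_sum (gamma : R) (k n : nat) : R :=
  sum_n_m (fun i => phi (INR i / INR n) * Rpower (INR n / INR i) gamma * / INR n)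
          k (n - 1).

Definition limit_term (gamma : R) (i : nat) : R :=
  / INR i - INR i / ((INR i + 1) * (INR i + 2 - gamma)).

From Stdlib Require Import Reals Lra Lia.
From Coquelicot Require Import Coquelicot.
Open Scope R_scope.

(* Write b = gamma - 2, which lies in (0, 1).  Reversing h_n = sum_{j<n} 1/(n-j), its
   terms with j >= k are (1/n) / (1 - x) at x = j/n, and
     1/(1 - x) - phi(x) x^(-gamma) = sum_m x^(m-b)/(m+2) - sum_m (x^(-b) - 1) x^m
   with nonnegative terms on both sides.  So, up to the first k terms of h_n, which are
   O(k/n) = o(1), h_n minus the tail sum is a difference of two double sums over m and j.
   For fixed m the inner sums are Riemann sums of x^(m-b) and x^(m-b) - x^m over [k/n, 1],
   which tend to 1/(m+1-b) and 1/(m+1-b) - 1/(m+1) because k = o(n); their tails in m are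
   bounded uniformly in n, by 1/(M+2-b) and b/(M+1-b).  Tannery's theorem lets the limit
   pass under the sum over m, and the difference of the two limiting series is the series
   of the statement. *)

(* Coquelicot's generic sums produce equalities in the carrier of an algebraic
   structure, which [ring] and [field] only recognise once restated in [R]. *)
Ltac eq_in_R := match goal with |- @eq _ ?u ?v => change (@eq R u v) end.

Lemma Rpower_gt0 x e : 0 < Rpower x e.
Proof. exact (exp_pos _). Qed.

Lemma Rpower_1_base e : Rpower 1 e = 1.
Proof. unfold Rpower; rewrite ln_1, Rmult_0_r; exact exp_0. Qed.

Lemma Rpower_sub_pow x b (m : nat) : 0 < x -> Rpower x (INR m - b) = Rpower x (- b) * x ^ m.
Proof.
  intro Hx. unfold Rminus. rewrite Rplus_comm, Rpower_plus, Rpower_pow; auto.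
Qed.

Lemma Rpower_le_base_antitone e u v : e <= 0 -> 0 < u <= v -> Rpower v e <= Rpower u e.
Proof.
  intros He Huv.
  replace e with (- (- e)) by ring. rewrite !(Rpower_Ropp _ (- e)).
  apply Rinv_le_contravar; [apply Rpower_gt0 | apply Rle_Rpower_l; lra].
Qed.

Lemma Rpower_le_exponent_antitone x e1 e2 : 0 < x <= 1 -> e1 <= e2 ->
  Rpower x e2 <= Rpower x e1.
Proof.
  intros Hx He. unfold Rpower.
  assert (ln x <= 0) by (rewrite <- ln_1; apply ln_le; lra).
  destruct (Req_dec (e2 * ln x) (e1 * ln x)) as [E | E]; [rewrite E; lra |].
  left; apply exp_increasing; nra.
Qed.

Lemma Rpower_increment_MVT e u v : -1 < e -> 0 < u < v ->
  exists w, u < w < v /\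
    (Rpower v (e + 1) - Rpower u (e + 1)) / (e + 1) = Rpower w e * (v - u).
Proof.
  intros He Huv.
  destruct (MVT_cor2 (fun x => Rpower x (e + 1)) (fun x => (e + 1) * Rpower x (e + 1 - 1)) u v)
    as [w [Hw Hwuv]]; [lra | intros x Hx; apply derivable_pt_lim_power; lra |].
  exists w; split; [exact Hwuv |].
  rewrite Hw. replace (e + 1 - 1) with e by ring. field. lra.
Qed.

Lemma Rpower_increment_ge0 e u v : 0 <= e -> 0 < u <= v ->
  Rpower u e * (v - u) <= (Rpower v (e + 1) - Rpower u (e + 1)) / (e + 1)
  <= Rpower v e * (v - u).
Proof.
  intros He Huv. destruct (Req_dec u v) as [-> | Hne].
  { replace (v - v) with 0 by ring. unfold Rdiv. rewrite Rminus_diag. lra. }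
  destruct (Rpower_increment_MVT e u v) as [w [Hw ->]]; [lra | lra |].
  split; apply Rmult_le_compat_r; try lra; apply Rle_Rpower_l; lra.
Qed.

Lemma Rpower_increment_le0 e u v : -1 < e <= 0 -> 0 < u <= v ->
  Rpower v e * (v - u) <= (Rpower v (e + 1) - Rpower u (e + 1)) / (e + 1)
  <= Rpower u e * (v - u).
Proof.
  intros He Huv. destruct (Req_dec u v) as [-> | Hne].
  { replace (v - v) with 0 by ring. unfold Rdiv. rewrite Rminus_diag. lra. }
  destruct (Rpower_increment_MVT e u v) as [w [Hw ->]]; [lra | lra |].
  split; apply Rmult_le_compat_r; try lra; apply Rpower_le_base_antitone; lra.
Qed.

Lemma is_lim_seq_Rpower_0 (y : nat -> R) c : 0 < c -> eventually (fun n => 0 < y n) ->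
  is_lim_seq y 0 -> is_lim_seq (fun n => Rpower (y n) c) 0.
Proof.
  intros Hc [N0 Hy] Hl. apply is_lim_seq_spec. apply is_lim_seq_spec in Hl.
  intro eps. set (d := Rpower eps (/ c)).
  destruct (Hl (mkposreal d (Rpower_gt0 _ _))) as [N HN]. exists (max N N0). intros n Hn.
  specialize (HN n ltac:(lia)). specialize (Hy n ltac:(lia)). simpl in HN.
  rewrite Rminus_0_r in *.
  rewrite Rabs_pos_eq in HN by lra. rewrite Rabs_pos_eq by (left; apply Rpower_gt0).
  apply Rlt_le_trans with (Rpower d c); [apply Rlt_Rpower_l; lra |].
  unfold d. rewrite Rpower_mult, Rinv_l, Rpower_1 by (try apply cond_pos; lra). lra.
Qed.

Lemma is_lim_seq_inv_INR_plus a : is_lim_seq (fun m => / (INR m + a)) 0.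
Proof.
  replace (Finite 0) with (Rbar_inv p_infty) by reflexivity.
  apply is_lim_seq_inv; [| discriminate].
  apply (is_lim_seq_plus _ _ p_infty a p_infty);
    [exact is_lim_seq_INR | apply is_lim_seq_const | reflexivity].
Qed.

Lemma is_lim_seq_inv_INR : is_lim_seq (fun n => / INR n) 0.
Proof.
  apply is_lim_seq_ext with (fun n => / (INR n + 0)); [intro; rewrite Rplus_0_r; reflexivity |].
  apply is_lim_seq_inv_INR_plus.
Qed.

Lemma sum_n_m_le_loc (f g : nat -> R) a b :
  (forall j, (a <= j <= b)%nat -> f j <= g j) -> sum_n_m f a b <= sum_n_m g a b.
Proof.
  induction b as [| b IH]; intro Hfg.
  - destruct a; [rewrite !sum_n_n; apply Hfg; lia |].
    rewrite !sum_n_m_zero by lia. apply Rle_refl.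
  - destruct (Compare_dec.le_lt_dec a (S b)).
    + rewrite !sum_n_Sm by lia.
      apply Rplus_le_compat; [apply IH; intros; apply Hfg | apply Hfg]; lia.
    + rewrite !sum_n_m_zero by lia. apply Rle_refl.
Qed.

Lemma sum_n_m_ge0_loc (f : nat -> R) a b :
  (forall j, (a <= j <= b)%nat -> 0 <= f j) -> 0 <= sum_n_m f a b.
Proof.
  intro Hf. rewrite <- (Rmult_0_r (INR (S b - a))), <- sum_n_m_const.
  exact (sum_n_m_le_loc _ _ a b Hf).
Qed.

Lemma sum_n_m_telescope (u : nat -> R) a b : (a <= S b)%nat ->
  sum_n_m (fun j => u (S j) - u j) a b = u (S b) - u a.
Proof.
  intro Hab. eq_in_R. revert Hab. induction b as [| b IH]; intro Hab.
  - destruct a; [rewrite sum_n_n; reflexivity |].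
    replace a with 0%nat by lia. rewrite sum_n_m_zero by lia. change zero with 0. ring.
  - destruct (Nat.eq_dec a (S (S b))) as [-> |].
    + rewrite sum_n_m_zero by lia. change zero with 0. ring.
    + rewrite sum_n_Sm, IH by lia. change plus with Rplus. ring.
Qed.

Lemma sum_n_m_minus (f g : nat -> R) a b :
  sum_n_m (fun j => f j - g j) a b = sum_n_m f a b - sum_n_m g a b.
Proof.
  eq_in_R. induction b as [| b IH].
  - destruct a; [rewrite !sum_n_n; reflexivity |].
    rewrite !sum_n_m_zero by lia. change zero with 0. ring.
  - destruct (Compare_dec.le_lt_dec a (S b)).
    + rewrite !sum_n_Sm, IH by lia. change plus with Rplus. simpl. ring.
    + rewrite !sum_n_m_zero by lia. change zero with 0. ring.
Qed.

Lemma is_series_0 : is_series (fun _ : nat => 0) 0.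
Proof.
  change (is_lim_seq (sum_n (fun _ => 0)) 0).
  apply is_lim_seq_ext with (fun _ => 0); [| apply is_lim_seq_const].
  intro n. unfold sum_n. rewrite sum_n_m_const. ring.
Qed.

Lemma is_series_sum_n_m (f : nat -> nat -> R) (F : nat -> R) a b :
  (forall j, (a <= j <= b)%nat -> is_series (f j) (F j)) ->
  is_series (fun m => sum_n_m (fun j => f j m) a b) (sum_n_m F a b).
Proof.
  induction b as [| b IH]; intro Hf.
  - destruct a.
    + rewrite sum_n_n. apply is_series_ext with (f 0%nat); [| apply Hf; lia].
      intro m; rewrite sum_n_n; reflexivity.
    + rewrite sum_n_m_zero by lia. apply is_series_ext with (fun _ => 0); [| exact is_series_0].
      intro m; rewrite sum_n_m_zero by lia; reflexivity.
  - destruct (Compare_dec.le_lt_dec a (S b)).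
    + rewrite sum_n_Sm by lia.
      apply is_series_ext with (fun m => plus (sum_n_m (fun j => f j m) a b) (f (S b) m)).
      { intro m; rewrite sum_n_Sm by lia; reflexivity. }
      exact (is_series_plus _ _ _ _ (IH (fun j Hj => Hf j ltac:(lia))) (Hf (S b) ltac:(lia))).
    + rewrite sum_n_m_zero by lia. apply is_series_ext with (fun _ => 0); [| exact is_series_0].
      intro m; rewrite sum_n_m_zero by lia; reflexivity.
Qed.

Lemma is_series_le (a d : nat -> R) (la ld : R) :
  (forall m, a m <= d m) -> is_series a la -> is_series d ld -> la <= ld.
Proof.
  intros Had Ha Hd.
  apply (is_lim_seq_le (sum_n a) (sum_n d) la ld); [| exact Ha | exact Hd].
  intro n. apply sum_n_m_le_loc. auto.
Qed.

Lemma sum_n_le_is_series (a : nat -> R) (l : R) K :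
  (forall m, 0 <= a m) -> is_series a l -> sum_n a K <= l.
Proof.
  intros Ha Hl.
  apply (is_lim_seq_le_loc (fun _ => sum_n a K) (sum_n a) (sum_n a K) l);
    [| apply is_lim_seq_const | exact Hl].
  exists K. intros n Hn. destruct (Nat.eq_dec n K) as [-> | ]; [apply Rle_refl |].
  assert (Htail : sum_n_m a (S K) n = sum_n a n - sum_n a K)
    by exact (sum_n_m_sum_n a K n ltac:(lia)).
  assert (0 <= sum_n_m a (S K) n) by (apply sum_n_m_ge0_loc; auto).
  lra.
Qed.

Lemma is_series_le_sum_n_add (a d : nat -> R) (l D : R) M :
  is_series a l -> is_series d D -> (forall m, a (S M + m)%nat <= d m) ->
  l <= sum_n a M + D.
Proof.
  intros Ha Hd Had.
  assert (Htail : is_series (fun m => a (S M + m)%nat) (l - sum_n a M)).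
  { apply is_series_incr_n; [lia |]. simpl.
    match goal with |- is_series _ ?x => replace x with l; [exact Ha |] end.
    change plus with Rplus. simpl.
    unfold Rminus. rewrite Rplus_assoc, Rplus_opp_l, Rplus_0_r. reflexivity. }
  assert (l - sum_n a M <= D) by exact (is_series_le _ _ _ _ Had Htail Hd).
  lra.
Qed.

Lemma is_series_telescope (u : nat -> R) : is_lim_seq u 0 ->
  is_series (fun m => u m - u (S m)) (u 0%nat).
Proof.
  intro Hu. change (is_lim_seq (sum_n (fun m => u m - u (S m))) (u 0%nat)).
  apply is_lim_seq_ext with (fun n => u 0%nat - u (S n)).
  { intro n. unfold sum_n.
    rewrite (sum_n_m_ext _ (fun j => (fun i => - u i) (S j) - (fun i => - u i) j))
      by (intro; simpl; ring).
    rewrite (sum_n_m_telescope (fun i => - u i)) by lia. ring. }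
  replace (Finite (u 0%nat)) with (Finite (u 0%nat - 0)) by (f_equal; ring).
  apply is_lim_seq_minus'; [apply is_lim_seq_const | exact (proj1 (is_lim_seq_incr_1 u 0) Hu)].
Qed.

Lemma is_lim_seq_sum_n (e : nat -> nat -> R) (el : nat -> R) K :
  (forall m, is_lim_seq (fun n => e n m) (el m)) ->
  is_lim_seq (fun n => sum_n (e n) K) (sum_n el K).
Proof.
  intro He. induction K as [| K IH].
  - rewrite sum_O. apply is_lim_seq_ext with (fun n => e n 0%nat); [| apply He].
    intro n; rewrite sum_O; reflexivity.
  - rewrite sum_Sn. apply is_lim_seq_ext with (fun n => sum_n (e n) K + e n (S K)).
    { intro n; rewrite sum_Sn; reflexivity. }
    apply is_lim_seq_plus'; auto.
Qed.

Section Tannery.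

Variables (e : nat -> nat -> R) (el E tau : nat -> R).
Hypothesis e_ge0 : forall n m, 0 <= e n m.
Hypothesis e_series : forall n, is_series (e n) (E n).
Hypothesis e_lim : forall m, is_lim_seq (fun n => e n m) (el m).
Hypothesis tau_lim : is_lim_seq tau 0.
Hypothesis e_tail : forall n M, E n <= sum_n (e n) M + tau M.

Let el_ge0 m : 0 <= el m.
Proof.
  apply (is_lim_seq_le (fun _ => 0) (fun n => e n m) 0 (el m));
    [intro; apply e_ge0 | apply is_lim_seq_const | apply e_lim].
Qed.

Let sum_n_el_le K M : sum_n el K <= sum_n el M + tau M.
Proof.
  change (Rbar_le (sum_n el K) (sum_n el M + tau M)).
  apply (is_lim_seq_le (fun n => sum_n (e n) K) (fun n => sum_n (e n) M + tau M));
    [| apply is_lim_seq_sum_n, e_lim | apply is_lim_seq_plus';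
       [apply is_lim_seq_sum_n, e_lim | apply is_lim_seq_const]].
  intro n. apply Rle_trans with (E n); [apply sum_n_le_is_series | apply e_tail]; auto.
Qed.

Theorem tannery : exists l, is_series el l /\ is_lim_seq E l.
Proof.
  destruct (ex_finite_lim_seq_incr (sum_n el) (sum_n el 0 + tau 0%nat)) as [l Hl].
  { intro n. rewrite sum_Sn. change plus with Rplus. simpl. specialize (el_ge0 (S n)). lra. }
  { intro n. apply sum_n_el_le. }
  exists l; split; [exact Hl |].
  assert (Hl_le : forall M, l <= sum_n el M + tau M).
  { intro M. change (Rbar_le l (sum_n el M + tau M)).
    apply (is_lim_seq_le (sum_n el) (fun _ => sum_n el M + tau M));
      [intro; apply sum_n_el_le | exact Hl | apply is_lim_seq_const]. }
  assert (Hl_ge : forall M, sum_n el M <= l) by (intro; apply sum_n_le_is_series; auto).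
  apply is_lim_seq_spec. intro eps. pose proof (cond_pos eps) as Heps.
  apply is_lim_seq_spec in tau_lim.
  destruct (tau_lim (mkposreal (eps / 2) ltac:(lra))) as [M HM].
  specialize (HM M (Nat.le_refl M)). simpl in HM. rewrite Rminus_0_r in HM.
  assert (Hpartial := is_lim_seq_sum_n e el M e_lim). apply is_lim_seq_spec in Hpartial.
  destruct (Hpartial (mkposreal (eps / 2) ltac:(lra))) as [N HN].
  exists N. intros n Hn. specialize (HN n Hn). simpl in HN.
  specialize (Hl_le M). specialize (Hl_ge M).
  assert (sum_n (e n) M <= E n) by (apply sum_n_le_is_series; auto).
  specialize (e_tail n M).
  apply Rabs_def1; apply Rabs_def2 in HN; apply Rabs_def2 in HM; lra.
Qed.

End Tannery.

Lemma CV_radius_const_1 : CV_radius (fun _ => 1) = 1.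
Proof.
  rewrite (CV_radius_finite_DAlembert _ 1); [rewrite Rinv_1; reflexivity | intro; lra | lra |].
  apply is_lim_seq_ext with (fun _ => 1); [| apply is_lim_seq_const].
  intro n. rewrite Rdiv_1_l, Rinv_1, Rabs_R1. reflexivity.
Qed.

Lemma CV_radius_Int_const_1_gt t : 0 <= t < 1 ->
  Rbar_lt (Rabs t) (CV_radius (PS_Int (fun _ => 1))).
Proof.
  intro Ht. rewrite CV_radius_Int, CV_radius_const_1, Rabs_pos_eq; simpl; lra.
Qed.

Lemma PSeries_Int_const_1 x : 0 <= x < 1 -> PSeries (PS_Int (fun _ => 1)) x = - ln (1 - x).
Proof.
  intro Hx. set (a := PS_Int (fun _ => 1)).
  enough (PSeries a 0 + ln (1 - 0) = PSeries a x + ln (1 - x)) as Hconst.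
  { assert (Ha0 : a 0%nat = 0) by reflexivity.
    rewrite PSeries_0, Ha0, Rminus_0_r, ln_1 in Hconst. lra. }
  destruct (Req_dec x 0) as [-> | Hx0]; [reflexivity |].
  apply (eq_is_derive (fun t => PSeries a t + ln (1 - t))); [| lra].
  intros t Ht.
  assert (Hgeom : PSeries (PS_derive a) t = / (1 - t)).
  { apply is_series_unique.
    apply is_series_ext with (fun n => t ^ n);
      [| apply is_series_geom; rewrite Rabs_pos_eq; lra].
    intro n. unfold PS_derive, a, PS_Int.
    rewrite Rdiv_1_l, Rinv_r, Rmult_1_l by (apply not_0_INR; lia). reflexivity. }
  replace (@zero R_NormedModule) with (plus (/ (1 - t)) (- / (1 - t)))
    by (change plus with Rplus; rewrite Rplus_opp_r; reflexivity).
  apply (is_derive_plus (PSeries a) (fun t => ln (1 - t))).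
  - rewrite <- Hgeom. apply is_derive_PSeries, CV_radius_Int_const_1_gt. lra.
  - auto_derive; [lra | field; lra].
Qed.

Lemma is_series_ln_1_minus x : 0 <= x < 1 ->
  is_series (fun m => x ^ S m / INR (S m)) (- ln (1 - x)).
Proof.
  intro Hx. set (a := PS_Int (fun _ => 1)).
  assert (Ha : is_series (fun m => a m * x ^ m) (- ln (1 - x))).
  { rewrite <- PSeries_Int_const_1 by exact Hx.
    apply is_series_ext
      with (2 := PSeries_correct _ _ (CV_radius_inside _ _ (CV_radius_Int_const_1_gt x Hx))).
    intro n. rewrite pow_n_pow. apply Rmult_comm. }
  apply is_series_ext with (fun m => a (S m) * x ^ S m).
  { intro m. unfold a, PS_Int. cbn -[INR pow]. field. apply not_0_INR; lia. }
  apply (is_series_incr_1 (fun m => a m * x ^ m)).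
  match goal with |- is_series _ ?l => replace l with (- ln (1 - x)) end; [exact Ha |].
  change plus with Rplus. simpl. lra.
Qed.

Definition riemann_sum (f : R -> R) (k n : nat) : R :=
  sum_n_m (fun j => f (INR j / INR n) * / INR n) k (n - 1).

Lemma grid_point_in_01 j n : (1 <= j)%nat -> (j < n)%nat -> 0 < INR j / INR n < 1.
Proof.
  intros Hj Hjn.
  assert (0 < INR j) by (apply lt_0_INR; lia).
  assert (INR j < INR n) by (apply lt_INR; lia).
  split; [apply Rdiv_lt_0_compat; lra |].
  apply Rmult_lt_reg_r with (INR n); [lra |]. field_simplify; lra.
Qed.

Lemma grid_step j n : (1 <= j)%nat -> (j < n)%nat ->
  0 < INR j / INR n <= INR (S j) / INR n /\ INR (S j) / INR n - INR j / INR n = / INR n.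
Proof.
  intros Hj Hjn. assert (0 < INR n) by (apply lt_0_INR; lia).
  pose proof (grid_point_in_01 j n Hj Hjn). rewrite S_INR.
  split; [split; [lra |] | field; lra].
  unfold Rdiv. apply Rmult_le_compat_r; [left; apply Rinv_0_lt_compat |]; lra.
Qed.

Lemma riemann_sum_le_01 f g k n : (1 <= k)%nat ->
  (forall x, 0 < x < 1 -> f x <= g x) -> riemann_sum f k n <= riemann_sum g k n.
Proof.
  intros Hk Hfg. apply sum_n_m_le_loc. intros j Hj.
  apply Rmult_le_compat_r; [left; apply Rinv_0_lt_compat, lt_0_INR; lia |].
  apply Hfg, grid_point_in_01; lia.
Qed.

Lemma riemann_sum_ext_01 f g k n : (1 <= k)%nat ->
  (forall x, 0 < x < 1 -> f x = g x) -> riemann_sum f k n = riemann_sum g k n.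
Proof.
  intros Hk Hfg. apply Rle_antisym; apply riemann_sum_le_01; auto.
  all: intros x Hx; rewrite Hfg; auto; apply Rle_refl.
Qed.

Lemma riemann_sum_ge0 f k n : (1 <= k)%nat ->
  (forall x, 0 < x < 1 -> 0 <= f x) -> 0 <= riemann_sum f k n.
Proof.
  intros Hk Hf. apply sum_n_m_ge0_loc. intros j Hj.
  apply Rmult_le_pos; [apply Hf, grid_point_in_01; lia |].
  left; apply Rinv_0_lt_compat, lt_0_INR; lia.
Qed.

Lemma riemann_sum_minus f g k n :
  riemann_sum (fun x => f x - g x) k n = riemann_sum f k n - riemann_sum g k n.
Proof.
  unfold riemann_sum. rewrite <- sum_n_m_minus.
  apply sum_n_m_ext. intro j. eq_in_R. ring.
Qed.

Lemma riemann_sum_scal_r f c k n :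
  riemann_sum (fun x => f x * c) k n = riemann_sum f k n * c.
Proof.
  unfold riemann_sum. rewrite <- (sum_n_m_mult_r c). apply sum_n_m_ext. intro j.
  eq_in_R. change mult with Rmult. simpl. ring.
Qed.

Lemma riemann_sum_shift f k n : (1 <= n)%nat -> (k <= n)%nat ->
  sum_n_m (fun j => f (INR (S j) / INR n) * / INR n) k (n - 1)
  = riemann_sum f k n + (f 1 - f (INR k / INR n)) * / INR n.
Proof.
  intros Hn Hk. eq_in_R. unfold riemann_sum.
  set (g := fun j : nat => f (INR j / INR n) * / INR n).
  rewrite (sum_n_m_ext _ (fun j => g j + (g (S j) - g j))) by (intro; unfold g; eq_in_R; ring).
  rewrite (sum_n_m_plus g (fun j => g (S j) - g j)), sum_n_m_telescope by lia.
  change plus with Rplus.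
  replace (S (n - 1)) with n by lia. unfold g.
  replace (INR n / INR n) with 1 by (field; apply not_0_INR; lia). simpl. ring.
Qed.

Lemma is_series_riemann_sum (f : nat -> R -> R) (F : R -> R) k n : (1 <= k)%nat ->
  (forall x, 0 < x < 1 -> is_series (fun m => f m x) (F x)) ->
  is_series (fun m => riemann_sum (f m) k n) (riemann_sum F k n).
Proof.
  intros Hk Hf. unfold riemann_sum.
  apply (is_series_sum_n_m (fun j m => f m (INR j / INR n) * / INR n)).
  intros j Hj. apply is_series_scal_r, Hf, grid_point_in_01; lia.
Qed.

Lemma sum_Rpower_grid_increments e k n : -1 < e -> (1 <= k <= n)%nat ->
  sum_n_m (fun j => (Rpower (INR (S j) / INR n) (e + 1)
                     - Rpower (INR j / INR n) (e + 1)) / (e + 1)) k (n - 1)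
  = (1 - Rpower (INR k / INR n) (e + 1)) / (e + 1).
Proof.
  intros He Hkn. eq_in_R.
  set (g := fun j : nat => Rpower (INR j / INR n) (e + 1) / (e + 1)).
  rewrite (sum_n_m_ext _ (fun j => g (S j) - g j)) by (intro; unfold g; eq_in_R; field; lra).
  rewrite sum_n_m_telescope by lia. replace (S (n - 1)) with n by lia. unfold g.
  replace (INR n / INR n) with 1 by (field; apply not_0_INR; lia).
  rewrite Rpower_1_base. field. lra.
Qed.

Lemma riemann_sum_Rpower_ge e k n : -1 < e -> (1 <= k <= n)%nat ->
  (1 - Rpower (INR k / INR n) (e + 1)) / (e + 1) - / INR n
  <= riemann_sum (fun x => Rpower x e) k n.
Proof.
  intros He Hkn.
  assert (Hn : 0 < / INR n) by (apply Rinv_0_lt_compat, lt_0_INR; lia).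
  rewrite <- sum_Rpower_grid_increments by (auto; lia).
  destruct (Rle_or_lt 0 e) as [He0 | He0].
  - pose proof (riemann_sum_shift (fun x => Rpower x e) k n ltac:(lia) ltac:(lia)) as Hshift.
    cbv beta in Hshift. rewrite Rpower_1_base in Hshift.
    pose proof (Rpower_gt0 (INR k / INR n) e).
    match goal with |- ?incr - _ <= _ =>
      enough (incr <= sum_n_m (fun j => Rpower (INR (S j) / INR n) e * / INR n) k (n - 1))
        by nra end.
    apply sum_n_m_le_loc. intros j Hj. destruct (grid_step j n) as [Huv Hvu]; try lia.
    rewrite <- Hvu. apply Rpower_increment_ge0; auto.
  - match goal with |- ?incr - _ <= ?rs => enough (incr <= rs) by lra end.
    apply sum_n_m_le_loc. intros j Hj. destruct (grid_step j n) as [Huv Hvu]; try lia.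
    rewrite <- Hvu. apply Rpower_increment_le0; auto; lra.
Qed.

Lemma riemann_sum_Rpower_le e k n : -1 < e -> (1 <= k)%nat ->
  riemann_sum (fun x => Rpower x e) k n <= / (e + 1).
Proof.
  intros He Hk.
  destruct (Compare_dec.le_lt_dec n k) as [Hnk | Hkn].
  { unfold riemann_sum. rewrite sum_n_m_zero by lia.
    left; apply Rinv_0_lt_compat; lra. }
  set (y := INR k / INR n).
  assert (Hn : 0 < / INR n) by (apply Rinv_0_lt_compat, lt_0_INR; lia).
  assert (Hy : 0 < y <= 1) by (pose proof (grid_point_in_01 k n Hk Hkn); unfold y; lra).
  pose proof (Rpower_gt0 y (e + 1)) as Hyc.
  pose proof (sum_Rpower_grid_increments e k n He ltac:(lia)) as Hincr. fold y in Hincr.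
  assert (Hcomp : (1 - Rpower y (e + 1)) / (e + 1) + Rpower y (e + 1) / (e + 1) = / (e + 1))
    by (field; lra).
  assert (0 < Rpower y (e + 1) / (e + 1)) by (apply Rdiv_lt_0_compat; lra).
  destruct (Rle_or_lt 0 e) as [He0 | He0].
  - enough (riemann_sum (fun x => Rpower x e) k n <= (1 - Rpower y (e + 1)) / (e + 1)) by lra.
    rewrite <- Hincr. apply sum_n_m_le_loc. intros j Hj.
    destruct (grid_step j n) as [Huv Hvu]; try lia.
    rewrite <- Hvu. apply Rpower_increment_ge0; auto.
  - pose proof (riemann_sum_shift (fun x => Rpower x e) k n ltac:(lia) ltac:(lia)) as Hshift.
    cbv beta in Hshift. rewrite Rpower_1_base in Hshift. fold y in Hshift.
    assert (Hshift_le : sum_n_m (fun j => Rpower (INR (S j) / INR n) e * / INR n) k (n - 1)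
                        <= (1 - Rpower y (e + 1)) / (e + 1)).
    { rewrite <- Hincr. apply sum_n_m_le_loc. intros j Hj.
      destruct (grid_step j n) as [Huv Hvu]; try lia.
      rewrite <- Hvu. apply Rpower_increment_le0; auto; lra. }
    (* the boundary term [y^e / n = y^(e+1) / k] is absorbed since [e + 1 <= 1] *)
    assert (Hboundary : Rpower y e * / INR n <= Rpower y (e + 1) / (e + 1)).
    { rewrite Rpower_plus, Rpower_1 by lra.
      assert (/ INR n <= y).
      { unfold y, Rdiv. rewrite <- (Rmult_1_l (/ INR n)) at 1.
        apply Rmult_le_compat_r; [lra | apply (le_INR 1); lia]. }
      assert (1 <= / (e + 1)) by (rewrite <- Rinv_1; apply Rinv_le_contravar; lra).
      pose proof (Rpower_gt0 y e).
      apply Rle_trans with (Rpower y e * y); [apply Rmult_le_compat_l; lra |].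
      unfold Rdiv. rewrite <- (Rmult_1_r (Rpower y e * y)) at 1.
      apply Rmult_le_compat_l; [left; apply Rmult_lt_0_compat |]; lra. }
    nra.
Qed.

Definition log_term (b x : R) (m : nat) : R := Rpower x (INR m - b) / (INR m + 2).
Definition log_sum (b x : R) : R := Rpower x (- b) * (- ln (1 - x) - x) / x ^ 2.
Definition geom_term (b x : R) (m : nat) : R := (Rpower x (- b) - 1) * x ^ m.
Definition geom_sum (b x : R) : R := (Rpower x (- b) - 1) / (1 - x).

Lemma phi_decomposition b x : 0 < x < 1 ->
  / (1 - x) - phi x * Rpower (/ x) (b + 2) = log_sum b x - geom_sum b x.
Proof.
  intro Hx. unfold phi, log_sum, geom_sum.
  replace (1 + x / (1 - x)) with (/ (1 - x)) by (field; lra).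
  rewrite ln_Rinv by lra.
  replace (Rpower (/ x) (b + 2)) with (Rpower x (- b) / x ^ 2).
  { field. lra. }
  rewrite <- (Rpower_pow 2) by lra. unfold Rdiv. rewrite <- Rpower_Ropp, <- Rpower_plus.
  unfold Rpower. rewrite ln_Rinv by lra. f_equal. simpl. ring.
Qed.

Lemma log_term_ge0 b x m : 0 <= log_term b x m.
Proof.
  apply Rdiv_le_0_compat; [left; apply Rpower_gt0 |].
  pose proof (pos_INR m). lra.
Qed.

Lemma geom_term_ge0 b x m : 0 <= b -> 0 < x < 1 -> 0 <= geom_term b x m.
Proof.
  intros Hb Hx. apply Rmult_le_pos; [| apply pow_le; lra].
  assert (Rpower x 0 <= Rpower x (- b)) by (apply Rpower_le_exponent_antitone; lra).
  rewrite Rpower_O in * by lra. lra.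
Qed.

Lemma is_series_log_term b x : 0 < x < 1 -> is_series (log_term b x) (log_sum b x).
Proof.
  intro Hx.
  assert (Hln2 : is_series (fun m => x ^ S (S m) / INR (S (S m))) (- ln (1 - x) - x)).
  { apply (is_series_incr_1 (fun m => x ^ S m / INR (S m))).
    match goal with |- is_series _ ?l => replace l with (- ln (1 - x)) end;
      [apply is_series_ln_1_minus; lra |].
    change plus with Rplus. simpl. field. }
  replace (log_sum b x) with ((- ln (1 - x) - x) * (Rpower x (- b) / x ^ 2))
    by (unfold log_sum; field; lra).
  apply is_series_ext with (2 := is_series_scal_r _ _ _ Hln2).
  intro m. unfold log_term. rewrite Rpower_sub_pow, !S_INR by lra.
  pose proof (pos_INR m). eq_in_R. simpl. field. lra.
Qed.

Lemma is_series_geom_term b x : 0 < x < 1 -> is_series (geom_term b x) (geom_sum b x).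
Proof.
  intro Hx. unfold geom_term, geom_sum. unfold Rdiv.
  apply (is_series_scal_l (Rpower x (- b) - 1) (fun m => x ^ m)).
  apply is_series_geom. rewrite Rabs_pos_eq; lra.
Qed.

Lemma geom_term_shift b x M m : geom_term b x (S M + m) = geom_term b x m * x ^ S M.
Proof. unfold geom_term. rewrite pow_add. ring. Qed.

Lemma geom_sum_pow_le b x M : 0 < b -> 0 < x < 1 ->
  geom_sum b x * x ^ S M <= b * Rpower x (INR M - b).
Proof.
  intros Hb Hx.
  set (P := Rpower x (- b)).
  assert (HPQ : P * (Rpower x b * x) = x).
  { unfold P. rewrite <- Rmult_assoc, <- Rpower_plus. replace (- b + b) with 0 by ring.
    rewrite Rpower_O by lra. ring. }
  assert (Hbernoulli : 1 - Rpower x b * x <= (b + 1) * (1 - x)).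
  { destruct (Rpower_increment_ge0 b x 1) as [_ H]; [lra | lra |].
    rewrite !Rpower_1_base, Rmult_1_l, Rpower_plus, Rpower_1 in H by lra.
    replace (1 - Rpower x b * x) with ((1 - Rpower x b * x) / (b + 1) * (b + 1))
      by (field; lra).
    nra. }
  assert (Hkey : (P - 1) * x <= b * P * (1 - x)).
  { assert (0 < P) by apply Rpower_gt0. nra. }
  pose proof (pow_lt x M ltac:(lra)).
  rewrite Rpower_sub_pow by lra. fold P. unfold geom_sum. fold P.
  replace ((P - 1) / (1 - x) * x ^ S M) with ((P - 1) * x * (x ^ M / (1 - x)))
    by (simpl; field; lra).
  replace (b * (P * x ^ M)) with (b * P * (1 - x) * (x ^ M / (1 - x))) by (field; lra).
  apply Rmult_le_compat_r; [apply Rlt_le, Rdiv_lt_0_compat |]; lra.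
Qed.

Lemma riemann_sum_log_term b m k n :
  riemann_sum (fun x => log_term b x m) k n
  = riemann_sum (fun x => Rpower x (INR m - b)) k n * / (INR m + 2).
Proof. rewrite <- riemann_sum_scal_r. reflexivity. Qed.

Lemma riemann_sum_geom_term b m k n : (1 <= k)%nat ->
  riemann_sum (fun x => geom_term b x m) k n
  = riemann_sum (fun x => Rpower x (INR m - b)) k n - riemann_sum (fun x => Rpower x (INR m)) k n.
Proof.
  intro Hk. rewrite <- riemann_sum_minus. apply riemann_sum_ext_01; auto. intros x Hx.
  unfold geom_term. rewrite Rpower_sub_pow, Rpower_pow by lra. ring.
Qed.

Lemma log_limit_le_telescope b (j : nat) : 0 < b < 1 ->
  / (INR j - b + 1) * / (INR j + 2) <= / (INR j - b + 1) - / (INR (S j) - b + 1).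
Proof.
  intro Hb. rewrite S_INR. pose proof (pos_INR j).
  replace (/ (INR j - b + 1) - / (INR j + 1 - b + 1))
    with (/ (INR j - b + 1) * / (INR j - b + 2)) by (field; lra).
  apply Rmult_le_compat_l; [left; apply Rinv_0_lt_compat; lra |].
  apply Rinv_le_contravar; lra.
Qed.

Lemma is_series_riemann_sum_log_term b k n : (1 <= k)%nat ->
  is_series (fun m => riemann_sum (fun x => log_term b x m) k n) (riemann_sum (log_sum b) k n).
Proof.
  intro Hk. apply is_series_riemann_sum; auto. intros x Hx. apply is_series_log_term, Hx.
Qed.

Lemma is_series_riemann_sum_geom_term b k n : (1 <= k)%nat ->
  is_series (fun m => riemann_sum (fun x => geom_term b x m) k n)
    (riemann_sum (geom_sum b) k n).
Proof.
  intro Hk. apply is_series_riemann_sum; auto. intros x Hx. apply is_series_geom_term, Hx.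
Qed.

Lemma riemann_sum_log_sum_tail_le b k n M : 0 < b < 1 -> (1 <= k)%nat ->
  riemann_sum (log_sum b) k n
  <= sum_n (fun m => riemann_sum (fun x => log_term b x m) k n) M + / (INR (S M) - b + 1).
Proof.
  intros Hb Hk. set (u := fun m : nat => / (INR m - b + 1)).
  assert (Htel : is_series (fun m => u (S M + m)%nat - u (S M + S m)%nat) (u (S M))).
  { replace (u (S M)) with (u (S M + 0)%nat) by (rewrite Nat.add_0_r; reflexivity).
    apply (is_series_telescope (fun m => u (S M + m)%nat)).
    apply is_lim_seq_ext with (fun m => / (INR m + (INR (S M) - b + 1)));
      [intro; unfold u; rewrite plus_INR; f_equal; ring | apply is_lim_seq_inv_INR_plus]. }
  apply (is_series_le_sum_n_add _ _ _ _ M (is_series_riemann_sum_log_term b k n Hk) Htel).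
  intro m. rewrite Nat.add_succ_r.
  eapply Rle_trans; [| apply log_limit_le_telescope; exact Hb].
  rewrite riemann_sum_log_term. pose proof (pos_INR (S M + m)).
  apply Rmult_le_compat_r; [left; apply Rinv_0_lt_compat; lra |].
  apply riemann_sum_Rpower_le; auto. lra.
Qed.

Lemma riemann_sum_geom_sum_tail_le b k n M : 0 < b < 1 -> (1 <= k)%nat ->
  riemann_sum (geom_sum b) k n
  <= sum_n (fun m => riemann_sum (fun x => geom_term b x m) k n) M + b * / (INR M - b + 1).
Proof.
  intros Hb Hk.
  assert (Htail : is_series (fun m => riemann_sum (fun x => geom_term b x (S M + m)) k n)
                    (riemann_sum (fun x => geom_sum b x * x ^ S M) k n)).
  { apply is_series_riemann_sum; auto. intros x Hx.
    apply is_series_ext with (fun m => geom_term b x m * x ^ S M);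
      [intro; symmetry; apply geom_term_shift |].
    apply is_series_scal_r, is_series_geom_term, Hx. }
  eapply Rle_trans.
  { apply (is_series_le_sum_n_add _ _ _ _ M (is_series_riemann_sum_geom_term b k n Hk) Htail).
    intro m; apply Rle_refl. }
  apply Rplus_le_compat_l.
  apply Rle_trans with (riemann_sum (fun x => Rpower x (INR M - b) * b) k n).
  - apply riemann_sum_le_01; auto. intros x Hx. rewrite (Rmult_comm _ b).
    apply geom_sum_pow_le; lra.
  - rewrite riemann_sum_scal_r, Rmult_comm. apply Rmult_le_compat_l; [lra |].
    apply riemann_sum_Rpower_le; auto. pose proof (pos_INR M). lra.
Qed.

Lemma harmonic_rev n : (1 <= n)%nat ->
  harmonic n = sum_n_m (fun j => / INR (n - j)) 0 (n - 1).
Proof.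
  destruct n as [| n]; [lia |]. intros _. replace (S n - 1)%nat with n by lia.
  unfold harmonic. induction n as [| n IH]; [rewrite !sum_n_n; reflexivity |].
  rewrite sum_n_Sm, IH, (sum_Sn_m _ 0 (S n)), <- sum_n_m_S by lia.
  change plus with Rplus. simpl. ring.
Qed.

Lemma harmonic_split k n : (1 <= k <= n)%nat ->
  harmonic n = sum_n_m (fun j => / INR (n - j)) 0 (k - 1) + riemann_sum (fun x => / (1 - x)) k n.
Proof.
  intro Hkn. rewrite harmonic_rev by lia.
  rewrite (sum_n_m_Chasles _ 0 (k - 1) (n - 1)) by lia.
  replace (S (k - 1)) with k by lia. change plus with Rplus. f_equal.
  apply sum_n_m_ext_loc. intros j Hj.
  assert (0 < INR n) by (apply lt_0_INR; lia).
  assert (INR j < INR n) by (apply lt_INR; lia).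
  rewrite minus_INR by lia. eq_in_R. field. split; lra.
Qed.

Lemma tail_sum_riemann gamma k n : (1 <= k)%nat ->
  tail_sum gamma k n = riemann_sum (fun x => phi x * Rpower (/ x) gamma) k n.
Proof.
  intro Hk. apply sum_n_m_ext_loc. intros j Hj.
  assert (0 < INR n) by (apply lt_0_INR; lia).
  assert (0 < INR j) by (apply lt_0_INR; lia).
  replace (INR n / INR j) with (/ (INR j / INR n)) by (field; lra). reflexivity.
Qed.

Lemma harmonic_sub_tail_sum gamma k n : (1 <= k <= n)%nat ->
  harmonic n - tail_sum gamma k n =
  sum_n_m (fun j => / INR (n - j)) 0 (k - 1)
  + (riemann_sum (log_sum (gamma - 2)) k n - riemann_sum (geom_sum (gamma - 2)) k n).
Proof.
  intro Hkn. rewrite (harmonic_split k n), tail_sum_riemann by lia.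
  enough (riemann_sum (fun x => / (1 - x)) k n
          - riemann_sum (fun x => phi x * Rpower (/ x) gamma) k n
          = riemann_sum (log_sum (gamma - 2)) k n - riemann_sum (geom_sum (gamma - 2)) k n)
    by lra.
  rewrite <- !riemann_sum_minus. apply riemann_sum_ext_01; [lia |]. intros x Hx.
  rewrite <- phi_decomposition by lra. replace (gamma - 2 + 2) with gamma by ring.
  reflexivity.
Qed.

Section SublinearCutoff.

Variable k : nat -> nat.
Hypothesis k_ge1 : forall n, (1 <= k n)%nat.
Hypothesis k_sublinear : is_lim_seq (fun n => INR (k n) / INR n) 0.

Lemma eventually_double_cutoff_le : eventually (fun n => (2 * k n <= n)%nat).
Proof.
  apply is_lim_seq_spec in k_sublinear.
  destruct (k_sublinear (mkposreal (1 / 2) ltac:(lra))) as [N HN].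
  exists (S N). intros n Hn. specialize (HN n ltac:(lia)). simpl in HN.
  assert (Hn0 : 0 < INR n) by (apply lt_0_INR; lia).
  assert (0 <= INR (k n) / INR n) by (apply Rdiv_le_0_compat; [apply pos_INR | lra]).
  rewrite Rminus_0_r, Rabs_pos_eq in HN by lra.
  apply INR_le. rewrite mult_INR. simpl.
  apply Rmult_le_reg_r with (/ INR n); [apply Rinv_0_lt_compat; lra |].
  replace (INR n * / INR n) with 1 by (field; lra). unfold Rdiv in HN. lra.
Qed.

Lemma is_lim_riemann_sum_Rpower e : -1 < e ->
  is_lim_seq (fun n => riemann_sum (fun x => Rpower x e) (k n) n) (/ (e + 1)).
Proof.
  intro He.
  apply is_lim_seq_le_le_loc with
    (u := fun n => (1 - Rpower (INR (k n) / INR n) (e + 1)) / (e + 1) - / INR n)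
    (w := fun _ => / (e + 1)); [| | apply is_lim_seq_const].
  - destruct eventually_double_cutoff_le as [N HN]. exists N. intros n Hn.
    specialize (HN n Hn). specialize (k_ge1 n).
    split; [apply riemann_sum_Rpower_ge | apply riemann_sum_Rpower_le]; auto; lia.
  - replace (Finite (/ (e + 1))) with (Finite ((1 - 0) * / (e + 1) - 0)) by (f_equal; field; lra).
    apply is_lim_seq_minus'; [| exact is_lim_seq_inv_INR].
    apply is_lim_seq_mult'; [| apply is_lim_seq_const].
    apply is_lim_seq_minus'; [apply is_lim_seq_const |].
    apply is_lim_seq_Rpower_0; [lra | | exact k_sublinear].
    exists 1%nat. intros n Hn. apply Rdiv_lt_0_compat; apply lt_0_INR; [apply k_ge1 | lia].
Qed.

Lemma is_lim_head_sum :
  is_lim_seq (fun n => sum_n_m (fun j => / INR (n - j)) 0 (k n - 1)) 0.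
Proof.
  apply is_lim_seq_le_le_loc with (u := fun _ => 0) (w := fun n => 2 * (INR (k n) / INR n));
    [| apply is_lim_seq_const |].
  - destruct eventually_double_cutoff_le as [N HN]. exists N. intros n Hn.
    specialize (HN n Hn). specialize (k_ge1 n).
    assert (Hn0 : 0 < INR n) by (apply lt_0_INR; lia).
    split.
    + apply sum_n_m_ge0_loc. intros j Hj. left. apply Rinv_0_lt_compat, lt_0_INR. lia.
    + apply Rle_trans with (sum_n_m (fun _ => 2 / INR n) 0 (k n - 1)).
      * apply sum_n_m_le_loc. intros j Hj.
        assert (INR n <= 2 * INR (n - j)) by (rewrite <- (mult_INR 2); apply le_INR; lia).
        assert (0 < INR (n - j)) by (apply lt_0_INR; lia).
        unfold Rdiv. rewrite <- (Rinv_inv 2), <- Rinv_mult.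
        apply Rinv_le_contravar; [apply Rmult_lt_0_compat |]; lra.
      * rewrite sum_n_m_const. replace (S (k n - 1) - 0)%nat with (k n) by lia.
        apply Req_le. field. lra.
  - replace (Finite 0) with (Rbar_mult 2 0) by (simpl; f_equal; ring).
    apply is_lim_seq_scal_l. exact k_sublinear.
Qed.

Variable b : R.
Hypothesis b_01 : 0 < b < 1.

Lemma is_lim_riemann_sum_log_sum : exists l : R,
  is_series (fun m => / (INR m - b + 1) * / (INR m + 2)) l /\
  is_lim_seq (fun n => riemann_sum (log_sum b) (k n) n) l.
Proof.
  apply (tannery (fun n m => riemann_sum (fun x => log_term b x m) (k n) n) _ _
           (fun M => / (INR (S M) - b + 1))).
  - intros n m. apply riemann_sum_ge0; auto. intros; apply log_term_ge0.
  - intro n. apply is_series_riemann_sum_log_term; auto.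
  - intro m. apply is_lim_seq_ext with
      (fun n => riemann_sum (fun x => Rpower x (INR m - b)) (k n) n * / (INR m + 2));
      [intro; symmetry; apply riemann_sum_log_term |].
    apply is_lim_seq_mult'; [| apply is_lim_seq_const].
    apply is_lim_riemann_sum_Rpower; auto. pose proof (pos_INR m). lra.
  - apply is_lim_seq_ext with (fun M => / (INR M + (2 - b)));
      [intro; rewrite S_INR; f_equal; ring | apply is_lim_seq_inv_INR_plus].
  - intros n M. apply riemann_sum_log_sum_tail_le; auto.
Qed.

Lemma is_lim_riemann_sum_geom_sum : exists l : R,
  is_series (fun m => / (INR m - b + 1) - / (INR m + 1)) l /\
  is_lim_seq (fun n => riemann_sum (geom_sum b) (k n) n) l.
Proof.
  apply (tannery (fun n m => riemann_sum (fun x => geom_term b x m) (k n) n) _ _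
           (fun M => b * / (INR M - b + 1))).
  - intros n m. apply riemann_sum_ge0; auto. intros; apply geom_term_ge0; lra.
  - intro n. apply is_series_riemann_sum_geom_term; auto.
  - intro m. apply is_lim_seq_ext with
      (fun n => riemann_sum (fun x => Rpower x (INR m - b)) (k n) n
                - riemann_sum (fun x => Rpower x (INR m)) (k n) n);
      [intro; symmetry; apply riemann_sum_geom_term; auto |].
    pose proof (pos_INR m).
    apply is_lim_seq_minus'; apply is_lim_riemann_sum_Rpower; auto; lra.
  - replace (Finite 0) with (Finite (b * 0)) by (f_equal; ring).
    apply is_lim_seq_mult'; [apply is_lim_seq_const |].
    apply is_lim_seq_ext with (fun M => / (INR M + (1 - b)));
      [intro; f_equal; ring | apply is_lim_seq_inv_INR_plus].
  - intros n M. apply riemann_sum_geom_sum_tail_le; auto.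
Qed.

End SublinearCutoff.

Theorem lemma2p1 (gamma : R) (k : nat -> nat) :
  2 < gamma < 3 ->
  (forall n, (1 <= k n)%nat) ->
  is_lim_seq (fun n => INR (k n) / INR n) 0 ->
  exists L : R,
    is_series (fun i => limit_term gamma (Datatypes.S i)) L /\
    is_lim_seq (fun n => harmonic n - tail_sum gamma (k n) n) L.
Proof.
  intros Hgamma Hk Hsub.
  set (b := gamma - 2). assert (Hb : 0 < b < 1) by (unfold b; lra).
  destruct (is_lim_riemann_sum_log_sum k Hk Hsub b Hb) as [lA [HA HlimA]].
  destruct (is_lim_riemann_sum_geom_sum k Hk Hsub b Hb) as [lB [HB HlimB]].
  exists (lA - lB). split.
  - apply is_series_ext with (2 := is_series_minus _ _ _ _ HA HB).
    intro m. unfold limit_term. rewrite S_INR. pose proof (pos_INR m).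
    replace gamma with (b + 2) by (unfold b; ring).
    change plus with Rplus. change opp with Ropp. eq_in_R. field. repeat split; lra.
  - apply is_lim_seq_ext_loc with (fun n => sum_n_m (fun j => / INR (n - j)) 0 (k n - 1)
      + (riemann_sum (log_sum b) (k n) n - riemann_sum (geom_sum b) (k n) n)).
    { destruct (eventually_double_cutoff_le k Hsub) as [N HN]. exists N. intros n Hn.
      symmetry. apply harmonic_sub_tail_sum. specialize (Hk n). specialize (HN n Hn). lia. }
    replace (Finite (lA - lB)) with (Finite (0 + (lA - lB))) by (f_equal; ring).
    apply is_lim_seq_plus'; [apply is_lim_head_sum; auto |].
    apply is_lim_seq_minus'; assumption.
Qed.
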